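(* Let $n_x, d \in \mathbb{Z}^+$, let $\kappa_{\max} > 1$, let $\mathsf{X} \in \mathbb{R}^{n_x \times d}$ be arbitrary, and let $\tilde{\mathsf{K}}_\nabla(\boldsymbol{\gamma})$ be the modified gradient-enhanced Gaussian kernel matrix defined in the context. Set $$\eta_{\tilde{\mathsf{K}}_\nabla}(n_x, d) = \frac{1 + (n_x-1) \frac{1 + \sqrt{1 + 4d}}{2} e^{-\frac{1 + 2d - \sqrt{1 + 4d}}{4d}}}{\kappa_{\max} - 1}.$$ Then for every $\boldsymbol{\gamma} = (\gamma_1,\ldots,\gamma_d)$ with all $\gamma_i > 0$, the $\ell_2$ condition number satisfies $\kappa\!\left(\tilde{\mathsf{K}}_\nabla(\boldsymbol{\gamma}) + \eta_{\tilde{\mathsf{K}}_\nabla}(n_x,d)\, \mathsf{I}\right) \le \kappa_{\max}$.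
   Context: Write $\tilde{x}_{ij} = \gamma_j x_{ij}$, where $x_{ij}$ is the $(i,j)$ entry of $\mathsf{X}$, and $\tilde{\mathbf{x}}_{i:} = (\tilde{x}_{i1},\ldots,\tilde{x}_{id})$. Define $n_x\times n_x$ matrices $\mathsf{K}_{ab} = \exp\!\left(-\tfrac12 \|\tilde{\mathbf{x}}_{a:} - \tilde{\mathbf{x}}_{b:}\|_2^2\right)$ and $(\tilde{\mathsf{R}}_j)_{ab} = \tilde{x}_{aj} - \tilde{x}_{bj}$. $\tilde{\mathsf{K}}_\nabla(\boldsymbol{\gamma})$ is the symmetric $n_x(d+1)\times n_x(d+1)$ block matrix with blocks indexed by $0,\ldots,d$: block $(0,0)$ is $\mathsf{K}$; block $(0,j)$ has entries $(\tilde{\mathsf{R}}_j)_{ab}\mathsf{K}_{ab}$; block $(i,0)$ has entries $-(\tilde{\mathsf{R}}_i)_{ab}\mathsf{K}_{ab}$; block $(i,j)$, $i,j\ge1$, has entries $(\delta_{ij} - (\tilde{\mathsf{R}}_i)_{ab}(\tilde{\mathsf{R}}_j)_{ab})\mathsf{K}_{ab}$. Equivalently $\tilde{\mathsf{K}}_\nabla = \mathsf{P}^{-1}\mathsf{K}_\nabla\mathsf{P}^{-1}$, where $\mathsf{K}_\nabla$ is the (positive semidefinite) gradient-enhanced kernel matrix of the Gaussian kernel $k(\mathbf{x},\mathbf{y}) = e^{-\frac12\sum_i \gamma_i^2(x_i-y_i)^2}$ at the rows of $\mathsf{X}$ (the covariance matrix of the function values and partial derivatives at these points) and $\mathsf{P}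 = \mathrm{diag}(\mathbf{1}_{n_x}, \gamma_1\mathbf{1}_{n_x},\ldots,\gamma_d\mathbf{1}_{n_x})$. $\mathsf{I}$ is the identity matrix and $\kappa(\cdot)$ the $\ell_2$ condition number. *)

From mathcomp Require Import all_boot all_order all_algebra.
From mathcomp Require Import all_classical all_reals all_analysis.
Set Implicit Arguments. Unset Strict Implicit. Unset Printing Implicit Defensive.
Import Order.TTheory GRing.Theory Num.Theory.
Local Open Scope classical_set_scope.
Local Open Scope ring_scope.

Section GEKernel.
Variables (R : realType) (n d : nat).
Variables (X : 'M[R]_(n, d)) (gamma : 'rV[R]_d).

Definition xt (a : 'I_n) (j : 'I_d) : R := gamma 0 j * X a j.

Definition Kg (a b : 'I_n) : R :=
  expR (- (1/2) * \sum_(j < d) (xt a j - xt b j) ^+ 2).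

Definition Rt (j : 'I_d) (a b : 'I_n) : R := xt a j - xt b j.

(* block (i,j), blocks indexed by 0..d; block index k >= 1 corresponds to
   column k-1 of X (i.e. unlift ord0 k = Some (k-1)). *)
Definition Kblock (i j : 'I_d.+1) : 'M[R]_(n, n) :=
  \matrix_(a, b)
    match unlift ord0 i, unlift ord0 j with
    | None, None => Kg a b
    | None, Some j' => Rt j' a b * Kg a b
    | Some i', None => - (Rt i' a b * Kg a b)
    | Some i', Some j' => ((i' == j')%:R - Rt i' a b * Rt j' a b) * Kg a b
    end.

Definition Ktilde : 'M[R]_(\sum_(i < d.+1) n) :=
  @mxblock R d.+1 d.+1 (fun _ => n) (fun _ => n) Kblock.

End GEKernel.

Definition vnorm2 {R : realType} {m : nat} (x : 'cV[R]_m) : R :=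
  Num.sqrt (\sum_(i < m) x i 0 ^+ 2).

Definition opnorm2 {R : realType} {m : nat} (A : 'M[R]_m) : R :=
  sup [set vnorm2 (A *m x) | x in [set x : 'cV[R]_m | vnorm2 x = 1]].

Definition cond2 {R : realType} {m : nat} (A : 'M[R]_m) : R :=
  opnorm2 A * opnorm2 (invmx A).

Definition eta_K {R : realType} (n d : nat) (kmax : R) : R :=
  (1 + (n%:R - 1) * ((1 + Num.sqrt (1 + 4 * d%:R)) / 2)
       * expR (- ((1 + 2 * d%:R - Num.sqrt (1 + 4 * d%:R)) / (4 * d%:R))))
  / (kmax - 1).

From mathcomp Require Import all_boot all_order all_algebra.
From mathcomp Require Import all_classical all_reals all_analysis.
From mathcomp Require Import ring lra.
Set Implicit Arguments. Unset Strict Implicit. Unset Printing Implicit Defensive.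
Import Order.TTheory GRing.Theory Num.Theory.
Import numFieldNormedType.Exports.
Local Open Scope classical_set_scope.
Local Open Scope ring_scope.

(* A := Ktilde + eta I is symmetric, and we show that its quadratic form lies
   between eta |y|^2 and (1 + (n - 1) c + eta) |y|^2, with c = gauss_peak d;
   the condition number is then at most (1 + (n - 1) c + eta) / eta = kmax.
   Lower bound: Ktilde is positive semidefinite.  After rescaling the
   coefficients of point a by exp (- |x_a|^2 / 2), its form becomes that of the
   gradient-enhanced kernel exp <x, y>, the limit of the Taylor sums of the
   gradient-enhanced kernels <x, y>^k / k!, which are positive semidefinite by
   induction on k since <x, y>^(k+1) = sum_j x_j y_j <x, y>^k.
   Upper bound: the diagonal blocks of Ktilde are the identity, and by weighted
   AM-GM inequalities each off-diagonal (d+1) x (d+1) block has norm at most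
   c, the maximum of (1 + sqrt d s) exp (- s^2 / 2). *)

Section DotProduct.
Variables (R : comPzRingType) (d : nat).
Implicit Types (r u v w : 'I_d -> R) (c : R).

Definition dot u v := \sum_(j < d) u j * v j.

Lemma dotC u v : dot u v = dot v u.
Proof. by apply: eq_bigr => j _; rewrite mulrC. Qed.

Lemma dotxx u : dot u u = \sum_(j < d) u j ^+ 2.
Proof. by apply: eq_bigr => j _; rewrite expr2. Qed.

Lemma dotZl c u v : dot (fun j => c * u j) v = c * dot u v.
Proof. by rewrite /dot mulr_sumr; apply: eq_bigr => j _; rewrite mulrA. Qed.

Lemma dotZr c u v : dot u (fun j => c * v j) = c * dot u v.
Proof. by rewrite dotC dotZl dotC. Qed.

Lemma dotDl u v w : dot (fun j => u j + v j) w = dot u w + dot v w.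
Proof. by rewrite /dot -big_split; apply: eq_bigr => j _; rewrite mulrDl. Qed.

Lemma dotBl u v w : dot (fun j => u j - v j) w = dot u w - dot v w.
Proof. by rewrite /dot -sumrB; apply: eq_bigr => j _; rewrite mulrBl. Qed.

Lemma dotDr u v w : dot u (fun j => v j + w j) = dot u v + dot u w.
Proof. by rewrite dotC dotDl !(dotC u). Qed.

Lemma dotBr u v w : dot u (fun j => v j - w j) = dot u v - dot u w.
Proof. by rewrite dotC dotBl !(dotC u). Qed.

Lemma sum_id_sub_rank1 r u v c :
  \sum_(i < d) \sum_(j < d) u i * (((i == j)%:R - r i * r j) * c) * v j =
  c * (dot u v - dot r u * dot r v).
Proof.
transitivity (\sum_(i < d) (c * (u i * v i) - c * (r i * u i) * dot r v)).
  apply: eq_bigr => i _.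
  have -> : \sum_(j < d) u i * (((i == j)%:R - r i * r j) * c) * v j =
      u i * c * \sum_(j < d) (i == j)%:R * v j - u i * c * r i * dot r v.
    by rewrite /dot !mulr_sumr -sumrB; apply: eq_bigr => j _; ring.
  rewrite (bigD1 i) //= eqxx mul1r big1 ?addr0 => [|j ji]; last first.
    by rewrite eq_sym (negbTE ji) mul0r.
  by ring.
by rewrite sumrB -mulr_suml -!mulr_sumr /dot; ring.
Qed.

End DotProduct.

Section GradPowKernel.
Variable R : realDomainType.

(* For [G = <x_a, x_b>], [A = <x_a, W_b>], [B = <x_b, W_a>], [C = <W_a, W_b>]
   this is the (a,b) term of the quadratic form of the gradient-enhanced
   kernel [<x, y> ^ k], with coefficients [P] on values and [W] on gradients. *)
Definition grad_pow_term (k : nat) (G Pa Pb A B C : R) :=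
  Pa * Pb * G ^+ k + k%:R * (Pa * A + Pb * B + C) * G ^+ k.-1
  + (k * k.-1)%:R * A * B * G ^+ k.-2.

Lemma grad_pow_termS k G Pa Pb A B C :
  grad_pow_term k.+1 G Pa Pb A B C =
  grad_pow_term k G Pa Pb A B C * G
  + (Pa * G ^+ k + k%:R * B * G ^+ k.-1) * A
  + (Pb * G ^+ k + k%:R * A * G ^+ k.-1) * B + G ^+ k * C.
Proof.
rewrite /grad_pow_term; case: k => [|[|k]] /=.
- by rewrite !mul0r; ring.
- by rewrite !expr0 !expr1; ring.
- by rewrite !exprS; ring.
Qed.

Lemma grad_pow_term_scale k G Pa Pb A B C xa xb wa wb :
  grad_pow_term k G (Pa * xa + wa) (Pb * xb + wb) (xb * A) (xa * B) (xb * (xa * C)) =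
  grad_pow_term k G Pa Pb A B C * (xa * xb)
  + (Pa * G ^+ k + k%:R * B * G ^+ k.-1) * (xa * wb)
  + (Pb * G ^+ k + k%:R * A * G ^+ k.-1) * (xb * wa) + G ^+ k * (wa * wb).
Proof. by rewrite /grad_pow_term; ring. Qed.

Variables (n d : nat) (x : 'I_n -> 'I_d -> R).

Definition grad_pow_form k (P : 'I_n -> R) (W : 'I_n -> 'I_d -> R) :=
  \sum_(a < n) \sum_(b < n) grad_pow_term k (dot (x a) (x b)) (P a) (P b)
     (dot (x a) (W b)) (dot (x b) (W a)) (dot (W a) (W b)).

(* [<x, y> ^ k.+1 = \sum_j x_j y_j <x, y> ^ k], and multiplying a kernel by
   [x_j y_j] amounts to a change of the coefficients. *)
Lemma grad_pow_formS k P W :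
  grad_pow_form k.+1 P W =
  \sum_(j < d) grad_pow_form k (fun a => P a * x a j + W a j)
                               (fun a i => x a j * W a i).
Proof.
rewrite /grad_pow_form [RHS]exchange_big; apply: eq_bigr => a _.
rewrite [RHS]exchange_big; apply: eq_bigr => b _.
under [RHS]eq_bigr => j _ do rewrite !dotZr dotZl grad_pow_term_scale.
by rewrite grad_pow_termS !big_split /= -!mulr_sumr.
Qed.

Lemma grad_pow_form_ge0 k P W : 0 <= grad_pow_form k P W.
Proof.
elim: k P W => [|k IHk] P W; last first.
  by rewrite grad_pow_formS; apply: sumr_ge0 => j _; apply: IHk.
rewrite /grad_pow_form /grad_pow_term /=.
under eq_bigr => a _ do under eq_bigr => b _ do
  rewrite !mul0r !addr0 expr0 mulr1.
under eq_bigr => a _ do rewrite -mulr_sumr.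
by rewrite -mulr_suml -expr2 sqr_ge0.
Qed.

End GradPowKernel.

Section GradExpKernel.
Variable R : realType.
Implicit Types (g G Pa Pb A B C : R) (M : nat).

Definition exp_partial M g := \sum_(k < M) g ^+ k / k`!%:R.

Lemma exp_partial_cvg g : exp_partial M g @[M --> \oo] --> expR g.
Proof.
have -> : (fun M => exp_partial M g) = series (exp_coeff g).
  by apply/funext => M; rewrite /series /= big_mkord.
exact: is_cvg_series_exp_coeff.
Qed.

Lemma natr_factS_div k g : k.+1%:R * g / k.+1`!%:R = g / k`!%:R :> R.
Proof.
have k1 : k.+1%:R != 0 :> R by rewrite pnatr_eq0.
have kf : k`!%:R != 0 :> R by rewrite pnatr_eq0 -lt0n fact_gt0.
by rewrite factS natrM; field; rewrite kf nat1r k1.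
Qed.

Lemma exp_partial_deriv M g :
  \sum_(k < M.+1) k%:R * g ^+ k.-1 / k`!%:R = exp_partial M g.
Proof.
rewrite big_ord_recl /= !mul0r add0r.
by apply: eq_bigr => k _; rewrite natr_factS_div.
Qed.

Lemma exp_partial_deriv2 M g :
  \sum_(k < M.+2) (k * k.-1)%:R * g ^+ k.-2 / k`!%:R = exp_partial M g.
Proof.
rewrite big_ord_recl /= !mul0r add0r -exp_partial_deriv.
by apply: eq_bigr => k _; rewrite add0n natrM -[X in X / _]mulrA natr_factS_div.
Qed.

Lemma grad_pow_term_partial_sum M G Pa Pb A B C :
  \sum_(k < M.+2) grad_pow_term k G Pa Pb A B C / k`!%:R =
  Pa * Pb * exp_partial M.+2 G + (Pa * A + Pb * B + C) * exp_partial M.+1 G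
  + A * B * exp_partial M G.
Proof.
rewrite -(exp_partial_deriv M.+1) -(exp_partial_deriv2 M) /exp_partial !mulr_sumr.
rewrite -!big_split /=; apply: eq_bigr => k _; rewrite /grad_pow_term; ring.
Qed.

Lemma grad_pow_term_series_cvg G Pa Pb A B C :
  \sum_(k < M.+2) grad_pow_term k G Pa Pb A B C / k`!%:R @[M --> \oo] -->
  expR G * ((Pa + B) * (Pb + A) + C).
Proof.
have cvgS1 : exp_partial M.+1 G @[M --> \oo] --> expR G.
  by have := @exp_partial_cvg G; rewrite -cvg_shiftS.
have cvgS2 : exp_partial M.+2 G @[M --> \oo] --> expR G.
  by move: cvgS1; rewrite -cvg_shiftS.
under eq_cvg do rewrite grad_pow_term_partial_sum.
rewrite (_ : _ * _ = Pa * Pb * expR G + (Pa * A + Pb * B + C) * expR G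
                     + A * B * expR G); last by ring.
by apply: cvgD; [apply: cvgD|]; apply: cvgMl_tmp; last exact: exp_partial_cvg.
Qed.

(* The quadratic form of the gradient-enhanced kernel [exp <x, y>]: a limit of
   the Taylor sums [\sum_(k < M) grad_pow_form k / k!]. *)
Lemma grad_exp_form_ge0 n d (x : 'I_n -> 'I_d -> R) (P : 'I_n -> R)
    (W : 'I_n -> 'I_d -> R) :
  0 <= \sum_(a < n) \sum_(b < n) expR (dot (x a) (x b)) *
        ((P a + dot (x b) (W a)) * (P b + dot (x a) (W b)) + dot (W a) (W b)).
Proof.
pose u M := \sum_(k < M.+2) grad_pow_form x k P W / k`!%:R.
have u_ge0 M : 0 <= u M.
  by apply: sumr_ge0 => k _; rewrite divr_ge0 ?grad_pow_form_ge0.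
apply: (@cvgr_to_ge _ \oo _ _ u); last exact: nearW.
have uE M : u M = \sum_(a < n) \sum_(b < n) \sum_(k < M.+2)
    grad_pow_term k (dot (x a) (x b)) (P a) (P b)
      (dot (x a) (W b)) (dot (x b) (W a)) (dot (W a) (W b)) / k`!%:R.
  rewrite /u /grad_pow_form.
  under eq_bigr => k _ do rewrite mulr_suml; rewrite exchange_big.
  apply: eq_bigr => a _; under eq_bigr => k _ do rewrite mulr_suml.
  by rewrite exchange_big.
under eq_cvg do rewrite uE.
apply: cvg_big => [|a _]; first exact: add_continuous.
apply: cvg_big => [|b _]; first exact: add_continuous.
exact: grad_pow_term_series_cvg.
Qed.

End GradExpKernel.

Section DotOrder.
Variables (R : realFieldType) (d : nat).
Implicit Types (r p u v w : 'I_d -> R).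

Lemma ler_term_sum (F : 'I_d -> R) j :
  (forall i, 0 <= F i) -> F j <= \sum_(i < d) F i.
Proof. by move=> F_ge0; rewrite (bigD1 j) //= lerDl sumr_ge0. Qed.

Lemma dot_self_ge0 u : 0 <= dot u u.
Proof. by apply: sumr_ge0 => j _; rewrite -expr2 sqr_ge0. Qed.

(* Lagrange's identity. *)
Lemma CauchySchwarz_dot u v : dot u v ^+ 2 <= dot u u * dot v v.
Proof.
pose g i j := u i * u i * (v j * v j) - u i * v i * (u j * v j).
have sum_g : \sum_(i < d) \sum_(j < d) g i j = dot u u * dot v v - dot u v ^+ 2.
  rewrite expr2 /dot !mulr_suml -sumrB; apply: eq_bigr => i _.
  by rewrite !mulr_sumr -sumrB; apply: eq_bigr => j _.
have lagrange : \sum_(i < d) \sum_(j < d) (u i * v j - u j * v i) ^+ 2 =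
                2 * (dot u u * dot v v - dot u v ^+ 2).
  transitivity (\sum_(i < d) \sum_(j < d) g i j + \sum_(i < d) \sum_(j < d) g j i).
    rewrite -big_split /=; apply: eq_bigr => i _.
    by rewrite -big_split /=; apply: eq_bigr => j _; rewrite /g /=; ring.
  by rewrite [X in _ + X]exchange_big sum_g; ring.
have : 0 <= 2 * (dot u u * dot v v - dot u v ^+ 2).
  by rewrite -lagrange; do 2!apply: sumr_ge0 => ? _; apply: sqr_ge0.
by rewrite pmulr_rge0 // subr_ge0.
Qed.

Lemma sum_norm_sqr_le r : (\sum_(j < d) `|r j|) ^+ 2 <= d%:R * dot r r.
Proof.
have := CauchySchwarz_dot (fun j => `|r j|) (fun _ => 1).
have -> : dot (fun j => `|r j|) (fun _ => 1) = \sum_(j < d) `|r j|.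
  by apply: eq_bigr => j _; rewrite mulr1.
have -> : dot (fun j => `|r j|) (fun j => `|r j|) = dot r r.
  by apply: eq_bigr => j _; rewrite -normrM -expr2 ger0_norm ?sqr_ge0 // expr2.
have -> : dot (fun _ : 'I_d => 1) (fun _ => 1) = d%:R :> R.
  by rewrite /dot; under eq_bigr do rewrite mulr1; rewrite sumr_const card_ord.
by rewrite mulrC.
Qed.

(* The quadratic form of [I - r r^T] lies between [(1 - |r|^2) |p|^2] and
   [|p|^2]; apply this to [p = w + w'] and [p = w - w']. *)
Lemma dot_sub_rank1_le r w (w' : 'I_d -> R) (lam : R) :
  1 <= lam -> dot r r - 1 <= lam ->
  dot w w' - dot r w * dot r w' <= lam * (dot w w + dot w' w') / 2.
Proof.
move=> lam_ge1 r_le.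
have Q_le p : dot p p - dot r p ^+ 2 <= lam * dot p p.
  have : 0 <= (lam - 1) * dot p p by rewrite mulr_ge0 ?dot_self_ge0 ?subr_ge0.
  have := sqr_ge0 (dot r p); nra.
have Q_ge p : - lam * dot p p <= dot p p - dot r p ^+ 2.
  have : 0 <= (lam + 1 - dot r r) * dot p p.
    by rewrite mulr_ge0 ?dot_self_ge0 //; lra.
  have := CauchySchwarz_dot r p; nra.
have := Q_le (fun j => w j + w' j); have := Q_ge (fun j => w j - w' j).
rewrite !(dotBl, dotBr, dotDl, dotDr) (dotC w' w); lra.
Qed.

Lemma amgm_norm (a b c : R) : a * (b * c) <= `|b| * ((a ^+ 2 + c ^+ 2) / 2).
Proof.
have [b_ge0|b_lt0] := lerP 0 b.
  by rewrite ger0_norm //; have := mulr_ge0 b_ge0 (sqr_ge0 (a - c)); nra.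
rewrite ltr0_norm //; have nb_ge0 : 0 <= - b by lra.
by have := mulr_ge0 nb_ge0 (sqr_ge0 (a + c)); nra.
Qed.

(* A Schur-type bound: every product of the bilinear form is split by AM-GM. *)
Lemma block_form_le_weighted r w (w' : 'I_d -> R) (v v' lam : R) :
  1 <= lam -> dot r r - 1 <= lam ->
  (v - dot r w) * (v' + dot r w') + dot w w' <=
  (1 + \sum_(j < d) `|r j|) * ((v ^+ 2 + v' ^+ 2) / 2)
  + \sum_(j < d) (`|r j| + lam) * ((w j ^+ 2 + w' j ^+ 2) / 2).
Proof.
move=> lam_ge1 r_le.
have cross : v * dot r w' - v' * dot r w <=
    \sum_(j < d) `|r j| * ((v ^+ 2 + v' ^+ 2) / 2 + (w j ^+ 2 + w' j ^+ 2) / 2).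
  rewrite /dot !mulr_sumr -sumrB; apply: ler_sum => j _.
  have := amgm_norm v (r j) (w' j); have := amgm_norm (- v') (r j) (w j).
  rewrite sqrrN; lra.
have rank1 := dot_sub_rank1_le w w' lam_ge1 r_le.
have vv' : v * v' <= (v ^+ 2 + v' ^+ 2) / 2 by have := sqr_ge0 (v - v'); nra.
have lam_sum : lam * (dot w w + dot w' w') / 2 =
               \sum_(j < d) lam * ((w j ^+ 2 + w' j ^+ 2) / 2).
  by rewrite /dot -big_split /= mulr_sumr mulr_suml; apply: eq_bigr => j _; ring.
rewrite lam_sum in rank1.
have -> : (1 + \sum_(j < d) `|r j|) * ((v ^+ 2 + v' ^+ 2) / 2)
          + \sum_(j < d) (`|r j| + lam) * ((w j ^+ 2 + w' j ^+ 2) / 2) =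
    (v ^+ 2 + v' ^+ 2) / 2
    + \sum_(j < d) `|r j| * ((v ^+ 2 + v' ^+ 2) / 2 + (w j ^+ 2 + w' j ^+ 2) / 2)
    + \sum_(j < d) lam * ((w j ^+ 2 + w' j ^+ 2) / 2).
  rewrite mulrDl mul1r mulr_suml -!addrA; congr (_ + _).
  by rewrite -!big_split /=; apply: eq_bigr => j _; ring.
have -> : (v - dot r w) * (v' + dot r w') + dot w w' =
          v * v' + (v * dot r w' - v' * dot r w) + (dot w w' - dot r w * dot r w').
  by ring.
lra.
Qed.

End DotOrder.

Section GaussBounds.
Variable R : realType.

(* The maximum over [s >= 0] of [(1 + sqrt d * s) * exp (- s ^ 2 / 2)],
   attained at [s = (sqrt (1 + 4 d) - 1) / (2 sqrt d)]. *)
Definition gauss_peak (d : nat) : R :=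
  (1 + Num.sqrt (1 + 4 * d%:R)) / 2
  * expR (- ((1 + 2 * d%:R - Num.sqrt (1 + 4 * d%:R)) / (4 * d%:R))).

(* With [m] the peak value of [1 + sqrt d * s] and [e] the peak exponent,
   AM-GM gives [1 + t <= m (1 + (S / 2 - e))], and [1 + x <= exp x]. *)
Lemma gauss_peak_ge d (t S : R) : (0 < d)%N -> t ^+ 2 <= d%:R * S ->
  (1 + t) * expR (- (1/2) * S) <= gauss_peak d.
Proof.
move=> d_gt0 tS; rewrite /gauss_peak.
set dd := d%:R : R; set D := Num.sqrt _.
set e := (1 + 2 * dd - D) / (4 * dd); set m := (1 + D) / 2.
have dd_ge1 : 1 <= dd by rewrite ler1n.
have D2 : D ^+ 2 = 1 + 4 * dd by rewrite sqr_sqrtr //; lra.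
have D_ge0 : 0 <= D by apply: sqrtr_ge0.
have D_gt1 : 1 < D by nra.
have m_gt0 : 0 < m by rewrite /m; lra.
have me : m * e = m - 1 - dd / (2 * m).
  have ddE : dd = (D ^+ 2 - 1) / 4 by rewrite D2; field.
  have D1 : D - 1 != 0 by rewrite subr_eq0 gt_eqF.
  have D1' : 1 + D != 0 by rewrite gt_eqF //; lra.
  have D21 : D ^+ 2 - 1 != 0 by rewrite subr_eq0 gt_eqF //; nra.
  by rewrite /e /m ddE; field; rewrite ?D1 ?D1' ?D21.
have amgm : 2 * t <= m * S + dd / m.
  have dd_gt0 : 0 < dd by lra.
  have : m / dd * t ^+ 2 <= m * S.
    by rewrite mulrAC ler_pdivrMr // -[m * S * dd]mulrA (ler_pM2l m_gt0) mulrC.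
  have : 0 <= m / dd * (t - dd / m) ^+ 2.
    by rewrite mulr_ge0 ?sqr_ge0 // divr_ge0 // ltW.
  have -> : m / dd * (t - dd / m) ^+ 2 = m / dd * t ^+ 2 - 2 * t + dd / m.
    by field; rewrite !gt_eqF.
  lra.
have tangent : 1 + t <= m * expR (S / 2 - e).
  apply: le_trans (_ : m * (1 + (S / 2 - e)) <= _); last first.
    by rewrite ler_pM2l // expR_ge1Dx.
  have -> : m * (1 + (S / 2 - e)) = 1 + (m * S + dd / m) / 2.
    by rewrite !mulrDr mulr1 mulrN me; field; rewrite gt_eqF.
  lra.
rewrite -(ler_pM2r (expR_gt0 (S / 2))) -mulrA -expRD.
rewrite (_ : - (1/2) * S + S / 2 = 0); last by field.
by rewrite expR0 mulr1 -[leRHS]mulrA -expRD [- e + _]addrC.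
Qed.

Lemma gauss_peak_ge1 d : (0 < d)%N -> 1 <= gauss_peak d.
Proof.
move=> d_gt0; have := @gauss_peak_ge d 0 0 d_gt0.
by rewrite expr0n mulr0 mulr0 addr0 expR0 mulr1; apply.
Qed.

Lemma expR1_ge : 5 / 2 <= expR 1 :> R.
Proof.
have -> : 1 = 8%:R * (1 / 8) :> R by rewrite mulrC div1r mulVf // pnatr_eq0.
rewrite expRM_natl.
have e8 : 9 / 8 <= expR (1 / 8) :> R by have := @expR_ge1Dx R (1 / 8); lra.
apply: le_trans (lerXn2r 8 _ _ e8); last 2 first.
- by rewrite nnegrE; lra.
- by rewrite nnegrE expR_ge0.
by rewrite !exprS expr0; lra.
Qed.

Lemma gauss_tail_le1 (u S : R) : 0 <= u -> u ^+ 2 <= S -> 2 < S ->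
  expR (- (1/2) * S) * (u + S - 1) <= 1.
Proof.
move=> u_ge0 uS S_gt2.
have u_le : u <= S / 4 + 1 by have := sqr_ge0 (u - 2); nra.
have expS : 5 / 4 * S <= expR (S / 2).
  have -> : S / 2 = 1 + (S / 2 - 1) by ring.
  rewrite expRD; have := expR_ge1Dx (S / 2 - 1); have := expR1_ge.
  have : 0 <= S / 2 by lra.
  nra.
rewrite -(ler_pM2r (expR_gt0 (S / 2))) mulrAC -expRD.
rewrite (_ : - (1/2) * S + S / 2 = 0); last by field.
by rewrite expR0 !mul1r; lra.
Qed.

(* Each off-diagonal block of [Ktilde] has norm at most [gauss_peak d]: the
   weights of [block_form_le_weighted] are bounded by [gauss_peak_ge], and for
   [|r|^2 > 2] also by [gauss_tail_le1]. *)
Lemma block_form_le d (r w w' : 'I_d -> R) (v v' : R) : (0 < d)%N ->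
  expR (- (1/2) * dot r r) * ((v - dot r w) * (v' + dot r w') + dot w w')
  <= gauss_peak d / 2 * (v ^+ 2 + dot w w + v' ^+ 2 + dot w' w').
Proof.
move=> d_gt0.
set S := dot r r; set k := expR _; set c := gauss_peak d.
have k_gt0 : 0 < k by apply: expR_gt0.
pose lam := Num.max 1 (S - 1).
have lam_ge1 : 1 <= lam by rewrite le_max lexx.
have S_le : S - 1 <= lam by rewrite le_max lexx orbT.
have weight0 : k * (1 + \sum_(j < d) `|r j|) <= c.
  by rewrite mulrC; apply: gauss_peak_ge => //; apply: sum_norm_sqr_le.
have weight j : k * (`|r j| + lam) <= c.
  have [S_le2|S_gt2] := lerP S 2.
    rewrite /lam max_l; last lra.
    apply: le_trans weight0; rewrite ler_pM2l // addrC lerD2l.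
    by apply: ler_term_sum => i.
  rewrite /lam max_r; last lra.
  apply: le_trans (gauss_peak_ge1 d_gt0); rewrite addrA.
  apply: gauss_tail_le1 => //; rewrite real_normK ?num_real // expr2.
  by rewrite /S /dot; apply: ler_term_sum => i; rewrite -expr2 sqr_ge0.
have := block_form_le_weighted w w' v v' lam_ge1 S_le.
rewrite -(ler_pM2l k_gt0) => /le_trans; apply.
have -> : c / 2 * (v ^+ 2 + dot w w + v' ^+ 2 + dot w' w') =
    c * ((v ^+ 2 + v' ^+ 2) / 2) + \sum_(j < d) c * ((w j ^+ 2 + w' j ^+ 2) / 2).
  rewrite -mulr_sumr -mulr_suml big_split /=.
  by rewrite !dotxx; ring.
have half_ge0 (s t : R) : 0 <= (s ^+ 2 + t ^+ 2) / 2.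
  by rewrite divr_ge0 // addr_ge0 // sqr_ge0.
rewrite mulrDr mulr_sumr; apply: lerD.
  by rewrite [k * _]mulrA; apply: ler_wpM2r.
by apply: ler_sum => j _; rewrite [k * _]mulrA; apply: ler_wpM2r.
Qed.

End GaussBounds.

Section QuadraticForm.
Variables (R : realType) (N : nat).
Implicit Types (x y u : 'cV[R]_N) (A : 'M[R]_N).

Definition sqnorm x := \sum_(p < N) x p 0 ^+ 2.

Definition bform A x y := \sum_(p < N) \sum_(q < N) x p 0 * A p q * y q 0.

Lemma sqnorm_ge0 x : 0 <= sqnorm x.
Proof. by apply: sumr_ge0 => p _; apply: sqr_ge0. Qed.

Lemma sqnorm_eq0 x : (sqnorm x == 0) = (x == 0).
Proof.
apply/idP/eqP => [|->]; last by rewrite /sqnorm big1 // => p _; rewrite mxE expr0n.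
rewrite psumr_eq0 => [/allP x0|p _]; last exact: sqr_ge0.
apply/matrixP => p j; rewrite ord1 mxE.
by have := x0 p (mem_index_enum p); rewrite implyTb sqrf_eq0 => /eqP.
Qed.

Lemma bformE A x y : bform A x y = \sum_(p < N) x p 0 * (A *m y) p 0.
Proof.
apply: eq_bigr => p _; rewrite mxE mulr_sumr.
by apply: eq_bigr => q _; rewrite mulrA.
Qed.

Lemma bformC A x y : A^T = A -> bform A x y = bform A y x.
Proof.
move=> A_sym; rewrite /bform exchange_big; apply: eq_bigr => p _.
apply: eq_bigr => q _; rewrite -[in RHS]A_sym mxE; ring.
Qed.

Lemma bform_subZ A a b u x :
  bform A (b *: u - a *: x) (b *: u - a *: x) =
  b ^+ 2 * bform A u u - a * b * bform A u x - a * b * bform A x u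
  + a ^+ 2 * bform A x x.
Proof.
rewrite /bform !mulr_sumr -!sumrB -!big_split /=; apply: eq_bigr => p _.
rewrite !mulr_sumr -!sumrB -!big_split /=; apply: eq_bigr => q _.
by rewrite !mxE; ring.
Qed.

Lemma bform_add_scalar A e x :
  bform (A + e%:M) x x = bform A x x + e * sqnorm x.
Proof.
rewrite /bform /sqnorm mulr_sumr -big_split; apply: eq_bigr => p _.
under eq_bigr => q _ do rewrite !mxE mulrDr mulrDl.
rewrite big_split /= [X in _ + X](bigD1 p) //= [X in _ + (_ + X)]big1 => [|q qp].
  by rewrite eqxx mulr1n addr0 mulrAC -expr2 mulrC.
by rewrite eq_sym (negbTE qp) mulr0n mulr0 mul0r.
Qed.

Lemma sqnorm_delta p : sqnorm (delta_mx p 0) = 1.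
Proof.
rewrite /sqnorm (bigD1 p) //= big1 => [|q qp]; rewrite !mxE ?eqxx.
  by rewrite expr1n addr0.
by rewrite (negbTE qp) expr0n.
Qed.

Lemma opnorm2_le A K : (0 < N)%N -> 0 <= K ->
  (forall x, sqnorm (A *m x) <= K ^+ 2 * sqnorm x) -> 0 <= opnorm2 A <= K.
Proof.
move=> N_gt0 K_ge0 AK.
pose e : 'cV[R]_N := delta_mx (Ordinal N_gt0) 0.
have ub v : [set vnorm2 (A *m x) | x in [set x | vnorm2 x = 1]] v -> v <= K.
  move=> [x /= x1 <-]; rewrite -(ger0_norm K_ge0) -sqrtr_sqr -[leRHS]mulr1 -x1.
  rewrite /vnorm2 -sqrtrM ?sqr_ge0 // ler_sqrt; first exact: AK.
  by rewrite mulr_ge0 ?sqr_ge0 ?sqnorm_ge0.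
have Ae : [set vnorm2 (A *m x) | x in [set x | vnorm2 x = 1]] (vnorm2 (A *m e)).
  by exists e => //=; rewrite /vnorm2 -/(sqnorm e) sqnorm_delta sqrtr1.
apply/andP; split; last by apply: ge_sup => //; exists (vnorm2 (A *m e)).
apply: le_trans (sqrtr_ge0 _) (sup_upper_bound _ Ae).
by split; [exists (vnorm2 (A *m e)) | exists K].
Qed.

End QuadraticForm.

Section RayleighBounds.
Variables (R : realType) (N : nat) (A : 'M[R]_N) (eta M : R).
Hypotheses (A_sym : A^T = A) (eta_gt0 : 0 < eta).
Hypothesis bform_ge : forall x, eta * sqnorm x <= bform A x x.
Hypothesis bform_le : forall x, bform A x x <= M * sqnorm x.

Lemma coercive_unitmx : A \in unitmx.
Proof.
rewrite -row_free_unit -kermx_eq0; apply/eqP/row_matrixP => i; rewrite row0.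
set z := row i _.
have Az : A *m z^T = 0 by rewrite -[A]A_sym -trmx_mul -row_mul mulmx_ker row0 trmx0.
have : eta * sqnorm z^T <= 0.
  by rewrite (le_trans (bform_ge _)) // bformE Az big1 // => p _; rewrite !mxE mulr0.
rewrite pmulr_rle0 // => z_le0; apply: trmx_inj; rewrite trmx0; apply/eqP.
by rewrite -sqnorm_eq0 eq_le z_le0 sqnorm_ge0.
Qed.

Lemma bform_self_ge0 x : 0 <= bform A x x.
Proof. by apply: le_trans (bform_ge x); rewrite mulr_ge0 ?sqnorm_ge0 // ltW. Qed.

Lemma bform_CauchySchwarz u x : bform A u x ^+ 2 <= bform A u u * bform A x x.
Proof.
have [->|x_neq0] := eqVneq x 0.
  have b0 y : bform A y 0 = 0.
    by rewrite bformE mulmx0 big1 // => p _; rewrite mxE mulr0.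
  by rewrite !b0 expr0n mulr0.
set a := bform A u x; set b := bform A x x.
have b_gt0 : 0 < b.
  apply: lt_le_trans (bform_ge x); rewrite mulr_gt0 // lt_def sqnorm_ge0.
  by rewrite sqnorm_eq0 x_neq0.
have := bform_self_ge0 (b *: u - a *: x).
rewrite bform_subZ (bformC x u A_sym) -/a -/b => h.
have : 0 <= b * (b * bform A u u - a ^+ 2).
  by move: h; congr (0 <= _); ring.
by rewrite pmulr_rge0 // subr_ge0 mulrC.
Qed.

Lemma sqnorm_mulmx_le x : sqnorm (A *m x) <= M ^+ 2 * sqnorm x.
Proof.
set u := A *m x.
have ux : bform A u x = sqnorm u.
  by rewrite bformE /sqnorm; apply: eq_bigr => p _; rewrite expr2.
have u_ge0 := sqnorm_ge0 u; have x_ge0 := sqnorm_ge0 x.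
have cs : sqnorm u ^+ 2 <= (M * sqnorm u) * (M * sqnorm x).
  rewrite -{1}ux; apply: le_trans (bform_CauchySchwarz u x) _.
  by apply: ler_pM; rewrite ?bform_self_ge0 ?bform_le.
have [u_gt0|u_le0] := ltrP 0 (sqnorm u); first by nra.
have -> : sqnorm u = 0 by apply/eqP; rewrite eq_le u_le0 u_ge0.
by rewrite mulr_ge0 ?sqr_ge0.
Qed.

Lemma sqnorm_invmx_le y : sqnorm (invmx A *m y) <= (eta^-1) ^+ 2 * sqnorm y.
Proof.
set x := invmx A *m y.
have Ax : A *m x = y by rewrite /x mulmxA mulmxV ?mul1mx // coercive_unitmx.
have amgm : 2 * eta * bform A x x <= eta ^+ 2 * sqnorm x + sqnorm y.
  rewrite bformE Ax /sqnorm !mulr_sumr -big_split; apply: ler_sum => p _ /=.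
  by have := sqr_ge0 (eta * x p 0 - y p 0); nra.
have ge2 : 2 * eta * (eta * sqnorm x) <= 2 * eta * bform A x x.
  by rewrite ler_pM2l ?bform_ge // mulr_gt0.
have : eta ^+ 2 * sqnorm x <= sqnorm y by lra.
by rewrite exprVn ler_pdivlMl // exprn_gt0.
Qed.

Lemma cond2_le : (0 < N)%N -> cond2 A <= M / eta.
Proof.
move=> N_gt0; pose e : 'cV[R]_N := delta_mx (Ordinal N_gt0) 0.
have M_ge0 : 0 <= M.
  have := le_trans (bform_ge e) (bform_le e); rewrite sqnorm_delta !mulr1.
  exact/le_trans/ltW.
have /andP[A_ge0 A_le] := opnorm2_le N_gt0 M_ge0 sqnorm_mulmx_le.
have etaV_ge0 : 0 <= eta^-1 by rewrite invr_ge0 ltW.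
have /andP[Ai_ge0 Ai_le] := opnorm2_le N_gt0 etaV_ge0 sqnorm_invmx_le.
exact: ler_pM.
Qed.

End RayleighBounds.

Section GradKernelMatrix.
Variables (R : realType) (n d : nat) (X : 'M[R]_(n, d)) (gamma : 'rV[R]_d).
Local Notation N := (\sum_(i < d.+1) n)%N.

Definition blk_idx (i : 'I_d.+1) (a : 'I_n) : 'I_N :=
  @tagnat.Rank _ (fun _ => n) i a.

Lemma sum_blk_idx (F : 'I_N -> R) :
  \sum_(p < N) F p = \sum_(i < d.+1) \sum_(a < n) F (blk_idx i a).
Proof.
rewrite (reindex (@tagnat.rank _ (fun _ => n))) /=; last exact: tagnat.rank_bij_on.
by rewrite [RHS]sig_big_dep /=; apply: eq_bigr => -[i a] _.
Qed.

Lemma Ktilde_blk i j a b :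
  Ktilde X gamma (blk_idx i a) (blk_idx j b) = Kblock X gamma i j a b.
Proof. by rewrite /Ktilde mxE /blk_idx /tagnat.sig1 /tagnat.sig2 !tagnat.rankK. Qed.

Lemma Kg_sym a b : Kg X gamma a b = Kg X gamma b a.
Proof. by rewrite /Kg; congr expR; congr (_ * _); apply: eq_bigr => j _; ring. Qed.

Lemma Rt_swap j a b : Rt X gamma j a b = - Rt X gamma j b a.
Proof. by rewrite /Rt opprB. Qed.

Lemma Kblock_sym i j a b : Kblock X gamma i j a b = Kblock X gamma j i b a.
Proof.
rewrite !mxE Kg_sym.
case: (unlift ord0 i) => [i'|]; case: (unlift ord0 j) => [j'|] //.
- by rewrite eq_sym !(Rt_swap _ a b); ring.
- by rewrite (Rt_swap _ a b); ring.
- by rewrite (Rt_swap _ a b); ring.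
Qed.

Lemma tr_Ktilde : (Ktilde X gamma)^T = Ktilde X gamma.
Proof. by apply/matrixP => p q; rewrite mxE /Ktilde mxE [RHS]mxE Kblock_sym. Qed.

Implicit Types (y : 'I_d.+1 -> 'I_n -> R) (a b : 'I_n).

Definition val_coef y a := y ord0 a.
Definition grad_coef y a : 'I_d -> R := fun j => y (lift ord0 j) a.
Definition coef_sqnorm y a :=
  val_coef y a ^+ 2 + dot (grad_coef y a) (grad_coef y a).
Definition xscaled a : 'I_d -> R := fun j => xt X gamma a j.
Definition xdiff a b : 'I_d -> R := fun j => Rt X gamma j a b.

Definition pair_form y a b :=
  \sum_(i < d.+1) \sum_(j < d.+1) y i a * Kblock X gamma i j a b * y j b.

Lemma pair_formE y a b :
  pair_form y a b = Kg X gamma a b *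
    ((val_coef y a - dot (xdiff a b) (grad_coef y a))
     * (val_coef y b + dot (xdiff a b) (grad_coef y b))
     + dot (grad_coef y a) (grad_coef y b)).
Proof.
rewrite /pair_form big_ord_recl big_ord_recl.
under [X in _ + X]eq_bigr => i _ do rewrite big_ord_recl.
rewrite !mxE /= !unlift_none.
under eq_bigr => j _ do rewrite !mxE liftK unlift_none.
under [X in _ + X]eq_bigr => i _ do (rewrite !mxE liftK unlift_none;
   under eq_bigr => j _ do rewrite !mxE !liftK).
rewrite big_split /=; set K := Kg X gamma a b.
have e01 : \sum_(j < d) y ord0 a * (Rt X gamma j a b * K) * y (lift ord0 j) b =
           val_coef y a * K * dot (xdiff a b) (grad_coef y b).
  rewrite /dot mulr_sumr; apply: eq_bigr => j _.
  by rewrite /val_coef /grad_coef /xdiff; ring.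
have e10 : \sum_(i < d) y (lift ord0 i) a * - (Rt X gamma i a b * K) * y ord0 b =
           - (val_coef y b * K * dot (xdiff a b) (grad_coef y a)).
  rewrite /dot mulr_sumr -sumrN; apply: eq_bigr => i _.
  by rewrite /val_coef /grad_coef /xdiff; ring.
rewrite e01 e10 (sum_id_sub_rank1 (xdiff a b) (grad_coef y a) (grad_coef y b)).
by rewrite /val_coef; ring.
Qed.

Definition coef (x : 'cV[R]_N) i a := x (blk_idx i a) 0.

Lemma bform_Ktilde x :
  bform (Ktilde X gamma) x x = \sum_(a < n) \sum_(b < n) pair_form (coef x) a b.
Proof.
rewrite /bform sum_blk_idx.
under eq_bigr => i _ do under eq_bigr => a _ do rewrite sum_blk_idx.
under eq_bigr => i _ do under eq_bigr => a _ do
  (under eq_bigr => j _ do under eq_bigr => b _ do rewrite Ktilde_blk).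
under eq_bigr => i _ do under eq_bigr => a _ do rewrite exchange_big.
rewrite exchange_big; apply: eq_bigr => a _.
by rewrite exchange_big; apply: eq_bigr => b _.
Qed.

Lemma sqnorm_coef x : sqnorm x = \sum_(a < n) coef_sqnorm (coef x) a.
Proof.
rewrite /sqnorm sum_blk_idx exchange_big; apply: eq_bigr => a _.
by rewrite (@big_ord_recl R 0 +%R d) /coef_sqnorm dotxx.
Qed.

Lemma Kg_factor a b :
  Kg X gamma a b = expR (- (1/2) * dot (xscaled a) (xscaled a))
    * expR (- (1/2) * dot (xscaled b) (xscaled b))
    * expR (dot (xscaled a) (xscaled b)).
Proof.
rewrite -!expRD /Kg; congr expR.
have -> : \sum_(j < d) (xt X gamma a j - xt X gamma b j) ^+ 2 =
    dot (xscaled a) (xscaled a) + dot (xscaled b) (xscaled b)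
    - 2 * dot (xscaled a) (xscaled b).
  rewrite /dot mulr_sumr -big_split -sumrB /=; apply: eq_bigr => j _.
  by rewrite /xscaled; ring.
by field.
Qed.

(* Scaling the coefficients of point [a] by [exp (- |x_a|^2 / 2)] turns the
   form of [Ktilde] into that of the gradient-enhanced kernel [exp <x, y>]. *)
Lemma pair_form_sum_ge0 y : 0 <= \sum_(a < n) \sum_(b < n) pair_form y a b.
Proof.
pose phi a := expR (- (1/2) * dot (xscaled a) (xscaled a)).
pose P a := phi a * (val_coef y a - dot (xscaled a) (grad_coef y a)).
pose W a j := phi a * grad_coef y a j.
have := grad_exp_form_ge0 xscaled P W.
congr (_ <= _); apply: eq_bigr => a _; apply: eq_bigr => b _.
rewrite pair_formE Kg_factor /xdiff /Rt !dotBl -/(xscaled a) -/(xscaled b).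
by rewrite /W /P !dotZr dotZl /phi; ring.
Qed.

Lemma pair_form_diag y a : pair_form y a a = coef_sqnorm y a.
Proof.
rewrite pair_formE.
have -> : Kg X gamma a a = 1.
  by rewrite /Kg big1 ?mulr0 ?expR0 // => j _; rewrite subrr expr0n.
have -> : dot (xdiff a a) (grad_coef y a) = 0.
  by rewrite /dot big1 // => j _; rewrite /xdiff /Rt subrr mul0r.
by rewrite /coef_sqnorm; ring.
Qed.

Lemma pair_form_le y a b : (0 < d)%N ->
  pair_form y a b <= gauss_peak R d / 2 * (coef_sqnorm y a + coef_sqnorm y b).
Proof.
move=> d_gt0; rewrite pair_formE /coef_sqnorm !addrA.
have -> : Kg X gamma a b = expR (- (1/2) * dot (xdiff a b) (xdiff a b)).
  by rewrite /Kg dotxx.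
exact: block_form_le.
Qed.

(* Gershgorin-type bound over the (d+1) x (d+1) blocks. *)
Lemma pair_form_sum_le y : (0 < d)%N ->
  \sum_(a < n) \sum_(b < n) pair_form y a b <=
  (1 + (n%:R - 1) * gauss_peak R d) * \sum_(a < n) coef_sqnorm y a.
Proof.
move=> d_gt0; set c := gauss_peak R d; set Y := coef_sqnorm y.
apply: le_trans
  (_ : \sum_(a < n) (Y a + c / 2 * \sum_(b < n | b != a) (Y a + Y b)) <= _).
  apply: ler_sum => a _; rewrite (bigD1 a) //= pair_form_diag lerD2l mulr_sumr.
  by apply: ler_sum => b _; apply: pair_form_le.
rewrite le_eqVlt; apply/orP; left; apply/eqP.
have offdiag a : \sum_(b < n | b != a) (Y a + Y b) =
                 n%:R * Y a + \sum_(b < n) Y b - (Y a + Y a).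
  rewrite [in RHS](_ : n%:R * Y a + _ = \sum_(b < n) (Y a + Y b)); last first.
    by rewrite [RHS]big_split /= sumr_const card_ord mulr_natl.
  by rewrite [in RHS](bigD1 a) //=; ring.
under eq_bigr => a _ do rewrite offdiag.
rewrite (eq_bigr (fun a => Y a * (1 + c / 2 * (n%:R - 2))
                          + c / 2 * \sum_(b < n) Y b)); last by move=> a _; ring.
by rewrite big_split /= -mulr_suml sumr_const card_ord -mulr_natl; field.
Qed.

Lemma bform_Ktilde_ge0 x : 0 <= bform (Ktilde X gamma) x x.
Proof. by rewrite bform_Ktilde; apply: pair_form_sum_ge0. Qed.

Lemma bform_Ktilde_le x : (0 < d)%N ->
  bform (Ktilde X gamma) x x <= (1 + (n%:R - 1) * gauss_peak R d) * sqnorm x.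
Proof. by move=> d_gt0; rewrite bform_Ktilde sqnorm_coef pair_form_sum_le. Qed.

End GradKernelMatrix.

Theorem mainTheorem3 (R : realType) (n d : nat) (kmax : R)
  (X : 'M[R]_(n, d)) (gamma : 'rV[R]_d) :
  (0 < n)%N -> (0 < d)%N -> 1 < kmax ->
  (forall j : 'I_d, 0 < gamma 0 j) ->
  let A := Ktilde X gamma + eta_K n d kmax *: 1%:M in
  A \in unitmx /\ cond2 A <= kmax.
Proof.
(* The bound holds for every [gamma], positive or not. *)
move=> n_gt0 d_gt0 kmax_gt1 _ A.
set c := 1 + (n%:R - 1) * gauss_peak R d.
have c_gt0 : 0 < c.
  have := gauss_peak_ge1 R d_gt0; have : 1 <= n%:R :> R by rewrite ler1n.
  by rewrite /c; nra.
have etaE : eta_K n d kmax = c / (kmax - 1) by rewrite /eta_K /c /gauss_peak !mulrA.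
have eta_gt0 : 0 < eta_K n d kmax by rewrite etaE divr_gt0 // subr_gt0.
have AE : A = Ktilde X gamma + (eta_K n d kmax)%:M by rewrite /A scalemx1.
have A_sym : A^T = A by rewrite AE linearD /= tr_Ktilde tr_scalar_mx.
have A_ge x : eta_K n d kmax * sqnorm x <= bform A x x.
  by rewrite AE bform_add_scalar lerDr bform_Ktilde_ge0.
have A_le x : bform A x x <= (c + eta_K n d kmax) * sqnorm x.
  by rewrite AE bform_add_scalar mulrDl lerD2r bform_Ktilde_le.
have N_gt0 : (0 < \sum_(i < d.+1) n)%N by rewrite sum_nat_const card_ord muln_gt0.
split; first exact: coercive_unitmx A_ge.
apply: le_trans (cond2_le A_sym eta_gt0 A_ge A_le N_gt0) _.
have kmax1 : kmax - 1 != 0 by rewrite subr_eq0 gt_eqF.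
rewrite etaE (_ : _ / _ = kmax) //.
by field; rewrite kmax1 gt_eqF.
Qed.
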